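(* Let $N\ge 2$ be an integer. For $k\in\mathbb{Z}$ let $D_k$ be the column vector of length $N$ whose $i$-th entry ($i=1,\dots,N$, from the top) is $p_{2(N-i)+1}(y,q^kz)$, and let $D'_k$ be the column vector whose $i$-th entry is $q^{2(N-i)+1}p_{2(N-i)+1}(y/q,q^kz)$. Then $$\det[D_{N-1},D_{N-2},\dots,D_1,D_0]=(q-1)^{\frac{N(N-1)}2}z^{\frac{N(N-1)}2}q^{\frac{(N-2)(N-1)N}6}\phi_N(y,z),$$ $$\det[D_{N-1},\dots,D_2,D_1,D'_0]=(-1)^{N-1}(q-1)^{\frac{N(N-1)}2}z^{\frac{(N-1)(N-2)}2}q^{\frac{N(N^2+5)}6}\phi_N(y/q,z),$$ $$\det[D_{N-1},\dots,D_2,D_1,D'_1]=(-1)^{N-1}(q-1)^{\frac{N(N-1)}2}z^{\frac{(N-1)(N-2)}2}q^{\frac{N(N^2+5)}6}(1+qz)\,\phi_N(y/q,z).$$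
   Context: $q$ is a fixed nonzero complex constant that is not a root of unity; $y,z$ are variables. For $k\in\mathbb{Z}$ the polynomials $p_k(y,z)$ are defined by the generating function $\sum_{n\ge 0}p_n(y,z)t^n=\frac{(-(1-q)t;q)_\infty}{((1-q)yt;q)_\infty((1-q)zt;q)_\infty}$, with $(a;q)_\infty=\prod_{i\ge0}(1-aq^i)$, and $p_k=0$ for $k<0$; equivalently $p_n(y,z)=(1-q)^n\sum_{a+b+c=n}\frac{y^a z^b q^{c(c-1)/2}}{(q;q)_a(q;q)_b(q;q)_c}$ with $(q;q)_m=\prod_{j=1}^m(1-q^j)$. For $N>0$, $\phi_N(y,z)=\det\big(p_{N-2i+j+1}(y,z)\big)_{i,j=1}^N$. *)

From HB Require Import structures.
From mathcomp Require Import all_boot all_order all_algebra.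
From mathcomp Require Import complex.
From mathcomp Require Import Rstruct.
Set Implicit Arguments. Unset Strict Implicit. Unset Printing Implicit Defensive.
Import Order.TTheory GRing.Theory Num.Theory.
Local Open Scope ring_scope.

Notation C := (complex Rdefinitions.R).

Definition qpoch (q : C) (m : nat) : C := \prod_(j < m) (1 - q ^+ j.+1).

Definition pnat (q : C) (n : nat) (y z : C) : C :=
  (1 - q) ^+ n *
  \sum_(a < n.+1) \sum_(b < (n - a).+1)
    let c := (n - a - b)%N in
    y ^+ a * z ^+ b * q ^+ ((c * (c - 1)) %/ 2)
      / (qpoch q a * qpoch q b * qpoch q c).

Definition p (q : C) (k : int) (y z : C) : C :=
  match k with
  | Posz n => pnat q n y z
  | Negz _ => 0
  end.

(* phi_N(y,z) = det (p_{N-2i+j+1}(y,z))_{i,j=1..N}; with 0-based i,j this is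
   p_{N - 2i + j}. *)
Definition phi (q : C) (N : nat) (y z : C) : C :=
  \det (\matrix_(i < N, j < N) p q (N%:Z - 2 * (i : nat)%:Z + (j : nat)%:Z) y z).

Definition Dent (q : C) (N : nat) (y z : C) (k : nat) (i : nat) : C :=
  pnat q (2 * (N - 1 - i)).+1 y (q ^+ k * z).

Definition Dent' (q : C) (N : nat) (y z : C) (k : nat) (i : nat) : C :=
  q ^+ (2 * (N - 1 - i)).+1 * pnat q (2 * (N - 1 - i)).+1 (y / q) (q ^+ k * z).

(* [D_{N-1}, D_{N-2}, ..., D_1, D_0]: column j (0-based) is D_{N-1-j} *)
Definition Dmat (q : C) (N : nat) (y z : C) : 'M[C]_N :=
  \matrix_(i < N, j < N) Dent q N y z (N - 1 - j) i.

Definition Dmat' (q : C) (N : nat) (y z : C) (k : nat) : 'M[C]_N :=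
  \matrix_(i < N, j < N)
    if (j : nat) == (N - 1)%N then Dent' q N y z k i
    else Dent q N y z (N - 1 - j) i.

From Pilot Require Import Defs.
From HB Require Import structures.
From mathcomp Require Import all_boot all_order all_algebra.
From mathcomp Require Import complex.
From mathcomp Require Import Rstruct.
From mathcomp Require Import ring zify.
Import Order.TTheory GRing.Theory Num.Theory.
Local Open Scope ring_scope.
Set Implicit Arguments.
Unset Strict Implicit.
Unset Printing Implicit Defensive.

(* Two generating-function identities drive everything:
   p_n(y, q w) = p_n(y, w) - (1 - q) w p_{n-1}(y, w)  and
   p_n(y, q w) = X_n + (1 - q) X_{n-1}  with  X_n = q^n p_n(y/q, w).
   Iterating the first, p_n(y, q^m z) = sum_k c_k p_{n-k}(y, z), where the c_k are the
   coefficients of prod_{i<m} (1 - (1 - q) q^i z X).  So every column D_k is the matrix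
   (p_{N-2i+j}(y, z)) of phi_N times a coefficient vector, the coefficient matrix is
   triangular, and its diagonal carries the top coefficients prod_i (q - 1) q^i z, which
   multiply up to the stated powers of q - 1, z and q.  The columns of the second
   determinant are handled the same way over X_n, starting from 1 + (1 - q) X, and
   D'_1 = (1 + q z) D'_0 - q z D_1 gives the third. *)

Lemma bin2_divn n : ((n * (n - 1)) %/ 2)%N = 'C(n, 2).
Proof. by rewrite bin2 -divn2 subn1. Qed.

Lemma bin3_mul6 n : ('C(n, 3) * 6 = n * (n - 1) * (n - 2))%N.
Proof.
by rewrite (bin_ffact n 3) !ffactnS ffactn0 muln1 -!subn1 -subnDA mulnA.
Qed.

Lemma bin3_divn n : (((n - 2) * (n - 1) * n) %/ 6)%N = 'C(n, 3).
Proof. by rewrite -[RHS](mulnK _ (isT : 0 < 6)%N) bin3_mul6; congr divn; lia. Qed.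

Lemma bin3_add_bin2_divn n :
  ((n * (n ^ 2 + 5)) %/ 6)%N = ('C(n, 3) + 'C(n.+1, 2))%N.
Proof.
rewrite -[RHS](mulnK _ (isT : 0 < 6)%N) mulnDl bin3_mul6.
have h2 : ('C(n.+1, 2) * 2 = n.+1 * n)%N.
  by rewrite (bin_ffact n.+1 2) !ffactnS ffactn0 muln1.
rewrite (_ : 6 = 2 * 3)%N // mulnA h2.
congr divn; case: n {h2} => [|[|n]] //; rewrite !subSS !subn0; ring.
Qed.

Section ShiftAction.

Variable R : comNzRingType.
Implicit Types (a P Q : {poly R}) (f : int -> R).

(* [shift_act P f] is [P(S) f] for the shift [(S f) n = f (n - 1)]. *)
Definition shift_act P f (n : int) : R := \sum_(k < size P) P`_k * f (n - k%:Z).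

Lemma shift_act_widen K P f n : (size P <= K)%N ->
  shift_act P f n = \sum_(k < K) P`_k * f (n - k%:Z).
Proof.
move=> hK; rewrite /shift_act (big_ord_widen K (fun k => P`_k * f (n - k%:Z))) //.
rewrite big_mkcond /=; apply: eq_bigr => k _.
by case: ltnP => // hk; rewrite nth_default ?mul0r.
Qed.

Lemma shift_act1 f n : shift_act 1 f n = f n.
Proof. by rewrite /shift_act size_poly1 big_ord1 coef1 mul1r subr0. Qed.

Lemma shift_actD P Q f n :
  shift_act (P + Q) f n = shift_act P f n + shift_act Q f n.
Proof.
pose K := maxn (size P) (size Q).
rewrite !(shift_act_widen (K := K)) ?leq_maxl ?leq_maxr ?size_polyD //.
by rewrite -big_split; apply: eq_bigr => k _; rewrite coefD mulrDl.
Qed.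

Lemma shift_actZ c P f n : shift_act (c *: P) f n = c * shift_act P f n.
Proof.
rewrite (shift_act_widen (K := size P)) ?size_scale_leq // mulr_sumr.
by apply: eq_bigr => k _; rewrite coefZ mulrA.
Qed.

Lemma shift_act_mulX P f n : shift_act (P * 'X) f n = shift_act P f (n - 1).
Proof.
have hsize : (size (P * 'X)%R <= (size P).+1)%N.
  by rewrite (leq_trans (size_polyMleq _ _)) // size_polyX addn2.
rewrite (shift_act_widen (K := (size P).+1)) // big_ord_recl coefMX /= mul0r add0r.
by apply: eq_bigr => k _; rewrite coefMX /= /bump /=; congr (_ * f _); lia.
Qed.

Lemma shift_act_mul_1subX P c f n :
  shift_act (P * (1 - c *: 'X)) f n = shift_act P f n - c * shift_act P f (n - 1).
Proof.
by rewrite mulrBr mulr1 -scalerAr -scaleNr shift_actD shift_actZ shift_act_mulX mulNr.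
Qed.

Lemma shift_act_iter (F : nat -> int -> R) (c : nat -> R) a f :
  (forall n, F 0%N n = shift_act a f n) ->
  (forall m n, F m.+1 n = F m n - c m * F m (n - 1)) ->
  forall m n, F m n = shift_act (a * \prod_(i < m) (1 - c i *: 'X)) f n.
Proof.
move=> F0 FS; elim=> [|m IHm] n; first by rewrite big_ord0 mulr1.
by rewrite FS !IHm big_ord_recr mulrA shift_act_mul_1subX.
Qed.

Lemma coef_mul_1subX P c k : (P * (1 - c *: 'X))`_k = P`_k - c * (P * 'X)`_k.
Proof. by rewrite mulrBr mulr1 coefB -scalerAr coefZ. Qed.

Lemma size_mul_prod_1subX a (c : nat -> R) m :
  (size (a * \prod_(i < m) (1 - c i *: 'X))%R <= size a + m)%N.
Proof.
elim: m => [|m IHm]; first by rewrite big_ord0 mulr1 addn0.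
apply/leq_sizeP => k hk; rewrite big_ord_recr mulrA coef_mul_1subX coefMX.
move/leq_sizeP: IHm => IHm.
rewrite IHm; last lia.
by case: eqP => [|k_neq0]; rewrite ?IHm ?mulr0 ?subr0 //; lia.
Qed.

Lemma coef_mul_prod_1subX a (c : nat -> R) m d : (size a <= d.+1)%N ->
  (a * \prod_(i < m) (1 - c i *: 'X))`_(d + m) = a`_d * \prod_(i < m) - c i.
Proof.
move=> ha; elim: m => [|m IHm]; first by rewrite !big_ord0 !mulr1 addn0.
rewrite big_ord_recr mulrA coef_mul_1subX coefMX addnS /= IHm.
rewrite (leq_sizeP _ _ (size_mul_prod_1subX _ _ _)); last lia.
by rewrite big_ord_recr /=; ring.
Qed.

(* Column j factors through the coefficients of [P j] read backwards; the size bound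
   makes that coefficient matrix triangular. *)
Lemma det_shift_act_cols N f (P : 'I_N -> {poly R}) :
    (forall j : 'I_N, (size (P j) <= N - j)%N) ->
  \det (\matrix_(i < N, j < N) shift_act (P j) f ((2 * (N - 1 - i)).+1)%:Z)
  = \det (\matrix_(i < N, j < N) f (N%:Z - 2 * (i : nat)%:Z + (j : nat)%:Z))
    * \prod_(j < N) (P j)`_(N - 1 - j).
Proof.
move=> sizeP; set T := \matrix_(k < N, j < N) (P j)`_(N - 1 - k).
have T_trig : is_trig_mx T.
  by apply/is_trig_mxP => k j ltkj; rewrite mxE (leq_sizeP _ _ (sizeP j)) //; lia.
have -> : \prod_(j < N) (P j)`_(N - 1 - j) = \det T.
  by rewrite (det_trig T_trig); apply: eq_bigr => j _; rewrite mxE.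
rewrite -det_mulmx; congr (\det _); apply/matrixP => i j.
rewrite !mxE (shift_act_widen (K := N)); last by rewrite (leq_trans (sizeP j)) ?leq_subr.
rewrite [RHS](reindex_inj rev_ord_inj); apply: eq_bigr => k _ /=.
rewrite !mxE mulrC [nat_of_ord (rev_ord k)]/=.
by move: (ltn_ord i) (ltn_ord k) => lt_iN lt_kN; congr (f _ * (P j)`_ _); lia.
Qed.

Lemma det_scale_rows_cols n (u v : 'I_n -> R) (A : 'M[R]_n) :
  \det (\matrix_(i, j) (u i * A i j * v j)) = \prod_i u i * \prod_j v j * \det A.
Proof.
have -> : \matrix_(i, j) (u i * A i j * v j)
          = diag_mx (\row_i u i) *m A *m diag_mx (\row_j v j).
  by rewrite mul_diag_mx mul_mx_diag; apply/matrixP => i j; rewrite !mxE.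
rewrite !det_mulmx !det_diag.
under eq_bigr do rewrite mxE.
under [X in _ * _ * X]eq_bigr do rewrite mxE.
by rewrite mulrAC.
Qed.

Lemma det_add_col_multiple n (A : 'M[R]_n) (j k : 'I_n) (a b : R) : k != j ->
  \det (\matrix_(i, l) if l == j then a * A i j + b * A i k else A i l)
  = a * \det A.
Proof.
move=> neq_kj; set C := \matrix_(l, i) A i (if l == j then k else l).
rewrite -det_tr -[\det A]det_tr.
rewrite (determinant_multilinear (B := A^T) (C := C) (i0 := j) (b := a) (c := b)).
- by rewrite (determinant_alternate (A := C) neq_kj) ?mulr0 ?addr0 // => i; rewrite !mxE eqxx (negPf neq_kj).
- by apply/rowP => i; rewrite !mxE eqxx.
- by apply/matrixP => l i; rewrite !mxE eq_sym (negPf (neq_lift _ _)).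
- by apply/matrixP => l i; rewrite !mxE eq_sym (negPf (neq_lift _ _)).
Qed.

End ShiftAction.

Lemma prod_geom (R : comPzRingType) (b r : R) m :
  \prod_(i < m) (r ^+ i * b) = b ^+ m * r ^+ 'C(m, 2).
Proof.
elim: m => [|m IHm]; first by rewrite big_ord0 bin_small // !expr0 mulr1.
by rewrite big_ord_recr IHm binS bin1 !exprS exprD /=; ring.
Qed.

Lemma prod_triangle_geom (R : comPzRingType) (b r : R) N :
  \prod_(j < N) \prod_(i < N - 1 - j) (r ^+ i * b) = b ^+ 'C(N, 2) * r ^+ 'C(N, 3).
Proof.
rewrite (reindex_inj rev_ord_inj) (eq_bigr (fun j : 'I_N => b ^+ j * r ^+ 'C(j, 2))).
  elim: N => [|N IHN]; first by rewrite big_ord0 !bin_small // !expr0 mulr1.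
  by rewrite big_ord_recr IHN !binS !bin1 !exprD /=; ring.
move=> j _; rewrite prod_geom [nat_of_ord (rev_ord j)]/=.
by move: (ltn_ord j) => lt_jN; rewrite (_ : N - 1 - (N - j.+1) = j)%N //; lia.
Qed.

Section CauchyProduct.

Variable R : comNzRingType.
Implicit Types (f g : nat -> R).

(* Coefficient sequences of power series: [cauchy f g] is the product and [shift1 g]
   the series multiplied by [t]. *)
Definition shift1 g (m : nat) : R := if m is m'.+1 then g m' else 0.

Definition cauchy f g (n : nat) : R := \sum_(i < n.+1) f i * g (n - i)%N.

Lemma eq_cauchy f1 f2 g1 g2 : f1 =1 f2 -> g1 =1 g2 -> cauchy f1 g1 =1 cauchy f2 g2.
Proof. by move=> ef eg n; apply: eq_bigr => i _; rewrite ef eg. Qed.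

Lemma cauchyC f g : cauchy f g =1 cauchy g f.
Proof.
move=> n; rewrite /cauchy (reindex_inj rev_ord_inj); apply: eq_bigr => i _ /=.
by rewrite subKn 1?mulrC ?subSS // -ltnS.
Qed.

Lemma cauchy_shift1 f g c :
  cauchy f (fun m => g m + c * shift1 g m) =1
  (fun n => cauchy f g n + c * shift1 (cauchy f g) n).
Proof.
move=> n; rewrite /cauchy; under eq_bigr do rewrite mulrDr.
rewrite big_split /=; congr (_ + _); case: n => [|n] /=.
  by rewrite big_ord1 !mulr0.
rewrite big_ord_recr subnn /= !mulr0 addr0 mulr_sumr.
by apply: eq_bigr => i _; rewrite subSn 1?mulrCA // -ltnS.
Qed.

Lemma cauchy_geom r f g n :
  cauchy (fun i => r ^+ i * f i) (fun i => r ^+ i * g i) n = r ^+ n * cauchy f g n.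
Proof.
rewrite /cauchy mulr_sumr; apply: eq_bigr => i _.
by rewrite -[in r ^+ n](subnKC (ltnSE (ltn_ord i))) exprD; ring.
Qed.

Lemma shift1_int (f : int -> R) n : f (-1) = 0 -> shift1 (fun k : nat => f k) n = f (n%:Z - 1).
Proof. by case: n => [|n] //= _; rewrite -addn1 PoszD addrK. Qed.

End CauchyProduct.

Section PRecurrences.

Variable q : C.
Hypothesis q_not_root : forall n : nat, (0 < n)%N -> q ^+ n != 1.

Lemma qpochS m : qpoch q m.+1 = qpoch q m * (1 - q ^+ m.+1).
Proof. by rewrite /qpoch big_ord_recr. Qed.

Lemma qpoch_neq0 m : qpoch q m != 0.
Proof. by apply/prodf_neq0 => i _; rewrite subr_eq0 eq_sym q_not_root. Qed.

Lemma one_sub_expq_neq0 m : 1 - q ^+ m.+1 != 0.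
Proof. by rewrite subr_eq0 eq_sym q_not_root. Qed.

(* The generating function of [p] is e((1 - q) y t) e((1 - q) z t) E(t), with the
   q-exponentials e(x t) = sum_a (qexp_coef x a) t^a and E(t) = sum_c (qExp_coef c) t^c;
   they satisfy e(q x t) = (1 - x t) e(x t) and E(t) = (1 + (1 - q) t) E(q t). *)
Definition qexp_coef (x : C) (a : nat) : C := x ^+ a / qpoch q a.

Definition qExp_coef (c : nat) : C := (1 - q) ^+ c * q ^+ 'C(c, 2) / qpoch q c.

Lemma pnat_cauchy n y z :
  Defs.pnat q n y z
  = cauchy (qexp_coef ((1 - q) * y)) (cauchy (qexp_coef ((1 - q) * z)) qExp_coef) n.
Proof.
rewrite /Defs.pnat /cauchy mulr_sumr; apply: eq_bigr => a _; rewrite !mulr_sumr.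
apply: eq_bigr => b _ /=; rewrite /qexp_coef /qExp_coef bin2_divn -subnDA.
move: (ltn_ord a) (ltn_ord b) => lta ltb.
rewrite -[in (1 - q) ^+ n](subnKC (_ : a + b <= n)%N); last by lia.
by rewrite !exprD !exprMn !invfM; ring.
Qed.

Lemma qexp_coefM r x a : qexp_coef (r * x) a = r ^+ a * qexp_coef x a.
Proof. by rewrite /qexp_coef exprMn mulrA. Qed.

Lemma qexp_coef_mulq x :
  qexp_coef (q * x) =1 (fun a => qexp_coef x a + - x * shift1 (qexp_coef x) a).
Proof.
case=> [|a] /=; first by rewrite mulr0 addr0 /qexp_coef !expr0.
rewrite /qexp_coef qpochS exprMn !exprS; field.
by rewrite qpoch_neq0 -exprS one_sub_expq_neq0.
Qed.

Lemma qExp_coef_rec :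
  qExp_coef =1 (fun c => q ^+ c * qExp_coef c
                         + (1 - q) * shift1 (fun c => q ^+ c * qExp_coef c) c).
Proof.
case=> [|c] /=; first by rewrite mulr0 addr0 expr0 mul1r.
rewrite /qExp_coef qpochS binS bin1 !exprD !exprS; field.
by rewrite qpoch_neq0 -exprS one_sub_expq_neq0.
Qed.

Lemma pnat_mulq_z n y w :
  Defs.pnat q n y (q * w)
  = Defs.pnat q n y w - (1 - q) * w * shift1 (fun k => Defs.pnat q k y w) n.
Proof.
set x := (1 - q) * w; set E := qexp_coef ((1 - q) * y).
have inner : cauchy (qexp_coef (q * x)) qExp_coef =1
    (fun m => cauchy (qexp_coef x) qExp_coef m
              + - x * shift1 (cauchy (qexp_coef x) qExp_coef) m).
  move=> m; rewrite cauchyC (eq_cauchy (frefl _) (qexp_coef_mulq x)) cauchy_shift1.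
  by rewrite cauchyC; congr (_ + _ * _); case: (m) => //= k; rewrite cauchyC.
rewrite !pnat_cauchy mulrCA (eq_cauchy (frefl E) inner) cauchy_shift1 mulNr.
by case: (n) => //= k; rewrite pnat_cauchy.
Qed.

Lemma pnat_mulq n y w :
  Defs.pnat q n (q * y) (q * w)
  = q ^+ n * Defs.pnat q n y w
    + (1 - q) * shift1 (fun k => q ^+ k * Defs.pnat q k y w) n.
Proof.
set E := qexp_coef ((1 - q) * y); set F := qexp_coef ((1 - q) * w).
set qE := fun a => q ^+ a * E a; set qF := fun b => q ^+ b * F b.
set qW := fun c => q ^+ c * qExp_coef c.
have qpnat k : q ^+ k * Defs.pnat q k y w = cauchy qE (cauchy qF qW) k.
  rewrite pnat_cauchy -cauchy_geom; apply: eq_cauchy => // j.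
  by rewrite cauchy_geom.
rewrite pnat_cauchy !(mulrCA _ q) (eq_cauchy (qexp_coefM q _) (frefl _)).
rewrite (eq_cauchy (frefl _) (eq_cauchy (qexp_coefM q _) qExp_coef_rec)).
rewrite (eq_cauchy (frefl _) (cauchy_shift1 _ _ _)) cauchy_shift1 qpnat.
by congr (_ + _ * _); case: (n) => //= k; rewrite qpnat.
Qed.

Lemma p_neg (n : int) y z : n < 0 -> p q n y z = 0.
Proof. by case: n. Qed.

Lemma p_mulq_z (n : int) y w :
  p q n y (q * w) = p q n y w - (1 - q) * w * p q (n - 1) y w.
Proof.
case: n => [k|k]; last by rewrite !p_neg ?mulr0 ?subr0 //; lia.
by rewrite /= pnat_mulq_z (shift1_int (f := fun n => p q n y w)).
Qed.

Lemma p_mulq (n : int) y w :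
  p q n (q * y) (q * w)
  = q ^ n * p q n y w + (1 - q) * (q ^ (n - 1) * p q (n - 1) y w).
Proof.
case: n => [k|k]; last by rewrite !p_neg ?mulr0 ?addr0 //; lia.
rewrite /= pnat_mulq (shift1_int (f := fun n => q ^ n * p q n y w)) //.
by rewrite mulr0.
Qed.

End PRecurrences.

Section Determinants.

Variable q : C.
Hypothesis q_neq0 : q != 0.
Hypothesis q_not_root : forall n : nat, (0 < n)%N -> q ^+ n != 1.

(* The entries of the columns D'_k; the exponent is an integer because [n] ranges over
   negative indices too, where [p] vanishes. *)
Definition pscaled (y w : C) (n : int) : C := q ^ n * p q n (y / q) w.

Lemma p_mulq_pscaled (n : int) y w :
  p q n y (q * w) = pscaled y w n + (1 - q) * pscaled y w (n - 1).
Proof. by rewrite -{1}(divfK q_neq0 y) mulrC p_mulq. Qed.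

Lemma pscaled_mulq (n : int) y w :
  pscaled y (q * w) n = (1 + q * w) * pscaled y w n - q * w * p q n y (q * w).
Proof.
have expq_pred : q ^ n = q ^ (n - 1) * q by rewrite -[in q](expr1z q) -expfzDr ?subrK.
by rewrite p_mulq_pscaled /pscaled p_mulq_z // expq_pred; ring.
Qed.

Definition pochX (w : C) (m : nat) : {poly C} := \prod_(i < m) (1 - (q ^+ i * w) *: 'X).

Lemma p_expq_shift_act a f y z m (n : int) :
    (forall n, p q n y z = shift_act a f n) ->
  p q n y (q ^+ m * z) = shift_act (a * pochX ((1 - q) * z) m) f n.
Proof.
move=> p_base; apply: (shift_act_iter (F := fun m n => p q n y (q ^+ m * z))
  (c := fun i => q ^+ i * ((1 - q) * z))).
  by move=> k /=; rewrite expr0 mul1r.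
by move=> k k' /=; rewrite exprS -mulrA p_mulq_z //; ring.
Qed.

Lemma size_mul_pochX (a : {poly C}) w m : (size (a * pochX w m)%R <= size a + m)%N.
Proof. exact: (size_mul_prod_1subX a (fun i => q ^+ i * w)). Qed.

Lemma coef_pochX_top (a : {poly C}) w m d : (size a <= d.+1)%N ->
  (a * pochX w m)`_(d + m) = a`_d * \prod_(i < m) (q ^+ i * - w).
Proof.
move=> size_a; rewrite /pochX (coef_mul_prod_1subX (fun i => q ^+ i * w)) //.
by congr (_ * _); apply: eq_bigr => i _; rewrite mulrN.
Qed.

Lemma det_pscaled_mx N y z :
  \det (\matrix_(i < N, j < N) pscaled y z (N%:Z - 2 * (i : nat)%:Z + (j : nat)%:Z))
  = q ^+ 'C(N.+1, 2) * phi q N (y / q) z.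
Proof.
rewrite /phi; set Phi := \matrix_(i < N, j < N) p q _ (y / q) z.
have -> : \matrix_(i < N, j < N) pscaled y z (N%:Z - 2 * (i : nat)%:Z + (j : nat)%:Z)
          = \matrix_(i, j) (q ^ (N%:Z - 2 * (i : nat)%:Z) * Phi i j * q ^ (j : nat)%:Z).
  by apply/matrixP => i j; rewrite !mxE /pscaled expfzDr //; ring.
rewrite det_scale_rows_cols -big_split /=; congr (_ * _).
have -> : \prod_(i < N) (q ^ (N%:Z - 2 * (i : nat)%:Z) * q ^ (i : nat)%:Z)
          = \prod_(i < N) q ^+ (N - i).
  apply: eq_bigr => i _; rewrite -expfzDr // exprnP; congr (q ^ _).
  by have := ltn_ord i; lia.
rewrite prodrXr (reindex_inj rev_ord_inj).
rewrite (eq_bigr (fun i : 'I_N => i.+1)) => [|i _]; last by rewrite /= subKn.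
congr (q ^+ _); elim: N {Phi} => [|N IHN]; first by rewrite big_ord0.
by rewrite big_ord_recr IHN [in RHS]binS bin1.
Qed.

Lemma det_Dmat N y z :
  \det (Dmat q N y z) = ((q - 1) * z) ^+ 'C(N, 2) * q ^+ 'C(N, 3) * phi q N y z.
Proof.
have -> : Dmat q N y z = \matrix_(i < N, j < N)
    shift_act (1 * pochX ((1 - q) * z) (N - 1 - j)) (fun n => p q n y z)
              ((2 * (N - 1 - i)).+1)%:Z.
  by apply/matrixP => i j; rewrite !mxE -(p_expq_shift_act (y := y)) // => n; rewrite shift_act1.
rewrite det_shift_act_cols => [|j]; last first.
  by rewrite (leq_trans (size_mul_pochX _ _ _)) // size_poly1; have := ltn_ord j; lia.
rewrite mulrC; congr (_ * _).
under eq_bigr => j _ do rewrite -[(N - 1 - j)%N]add0n coef_pochX_top ?size_poly1 // coef1 mul1r.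
by rewrite -mulNr opprB prod_triangle_geom.
Qed.

Lemma det_Dmat'0 N y z : (0 < N)%N ->
  \det (Dmat' q N y z 0)
  = (-1) ^+ (N - 1) * (q - 1) ^+ 'C(N, 2) * z ^+ 'C(N - 1, 2)
    * q ^+ ('C(N, 3) + 'C(N.+1, 2)) * phi q N (y / q) z.
Proof.
case: N => [//|M] _; rewrite subSS subn0.
pose lin : {poly C} := 1 + (1 - q) *: 'X.
have size_lin : (size lin <= 2)%N.
  rewrite (leq_trans (size_polyD _ _)) // geq_max size_poly1.
  by rewrite (leq_trans (size_scale_leq _ _)) ?size_polyX.
have p_mulq_lin n : p q n y (q * z) = shift_act lin (pscaled y z) n.
  by rewrite shift_actD shift_act1 shift_actZ -['X]mul1r shift_act_mulX shift_act1 p_mulq_pscaled.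
pose P (j : 'I_M.+1) := if (j : nat) == M then 1 else lin * pochX ((1 - q) * (q * z)) (M - 1 - j).
have -> : Dmat' q M.+1 y z 0 = \matrix_(i, j)
    shift_act (P j) (pscaled y z) ((2 * (M.+1 - 1 - i)).+1)%:Z.
  apply/matrixP => i j; rewrite !mxE /P /Dent /Dent' !subn1 /=.
  case: eqP => [_|ne_jM]; first by rewrite shift_act1 expr0 mul1r.
  rewrite -(p_expq_shift_act (y := y)) // mulrA -exprSr.
  by move: (ltn_ord j) => lt_jM; congr (Defs.pnat _ _ _ (q ^+ _ * z)); lia.
rewrite det_shift_act_cols => [|j]; last first.
  rewrite /P; case: eqP => [->|ne_jM]; first by rewrite size_poly1 subSn.
  by rewrite (leq_trans (size_mul_pochX _ _ _)) //; have := ltn_ord j; lia.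
rewrite [\det _]det_pscaled_mx big_ord_recr (_ : (P ord_max)`_ _ = 1) ?Monoid.mulm1; last first.
  by rewrite /P eqxx subn1 subnn coef1.
have -> : \prod_(j < M) (P (widen_ord (leqnSn M) j))`_(M.+1 - 1 - j)
          = (1 - q) ^+ M * (((q - 1) * (q * z)) ^+ 'C(M, 2) * q ^+ 'C(M, 3)).
  rewrite -prod_triangle_geom -[in (1 - q) ^+ M](card_ord M) -prodr_const -big_split.
  apply: eq_bigr => j _; rewrite /P /= ltn_eqF //.
  rewrite (_ : M.+1 - 1 - j = 1 + (M - 1 - j))%N; last by have := ltn_ord j; lia.
  rewrite coef_pochX_top // coefD coef1 coefZ coefX /= add0r mulr1.
  by congr (_ * _); apply: eq_bigr => i _; rewrite -mulNr opprB.
have binS2 : 'C(M.+1, 2) = (M + 'C(M, 2))%N by rewrite binS bin1 addnC.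
have binS3 : 'C(M.+1, 3) = ('C(M, 2) + 'C(M, 3))%N by rewrite binS addnC.
move: 'C(M.+2, 2) => c; rewrite binS2 binS3 -opprB (exprNn (q - 1)).
by rewrite !exprD !exprMn; ring.
Qed.

Lemma Dent'_1 N y z i :
  Dent' q N y z 1 i = (1 + q * z) * Dent' q N y z 0 i - q * z * Dent q N y z 1 i.
Proof. by rewrite /Dent' /Dent expr1 expr0 mul1r; apply: (pscaled_mulq (_.+1)%:Z). Qed.

Lemma det_Dmat'1 N y z : (1 < N)%N ->
  \det (Dmat' q N y z 1) = (1 + q * z) * \det (Dmat' q N y z 0).
Proof.
case: N => [|[|M]] // _.
have ne_M_max : inord M != ord_max :> 'I_M.+2 by rewrite -val_eqE /= inordK ?neq_ltn ?ltnSn.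
rewrite -(det_add_col_multiple _ _ (- (q * z)) ne_M_max); congr (\det _).
apply/matrixP => i l; rewrite !mxE !subn1 /= inordK // -val_eqE /= eqxx (ltn_eqF (ltnSn M)).
by case: eqP => // _; rewrite subSnn Dent'_1 mulNr.
Qed.

End Determinants.

Theorem lemma2 (q : C) (hq0 : q != 0)
    (hq : forall n : nat, (0 < n)%N -> q ^+ n != 1)
    (N : nat) (hN : (2 <= N)%N) (y z : C) :
  [/\ \det (Dmat q N y z)
        = (q - 1) ^+ ((N * (N - 1)) %/ 2) * z ^+ ((N * (N - 1)) %/ 2)
          * q ^+ (((N - 2) * (N - 1) * N) %/ 6) * phi q N y z,
      \det (Dmat' q N y z 0)
        = (-1) ^+ (N - 1) * (q - 1) ^+ ((N * (N - 1)) %/ 2)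
          * z ^+ (((N - 1) * (N - 2)) %/ 2)
          * q ^+ ((N * (N ^ 2 + 5)) %/ 6) * phi q N (y / q) z
    & \det (Dmat' q N y z 1)
        = (-1) ^+ (N - 1) * (q - 1) ^+ ((N * (N - 1)) %/ 2)
          * z ^+ (((N - 1) * (N - 2)) %/ 2)
          * q ^+ ((N * (N ^ 2 + 5)) %/ 6) * (1 + q * z) * phi q N (y / q) z].
Proof.
have bin2_pred : (((N - 1) * (N - 2)) %/ 2 = 'C(N - 1, 2))%N.
  by rewrite -bin2_divn -subnDA.
have det_Dmat'0_N := det_Dmat'0 hq0 hq y z (ltnW hN).
rewrite bin2_divn bin3_divn bin3_add_bin2_divn bin2_pred; split.
- by rewrite det_Dmat // exprMn.
- exact: det_Dmat'0_N.
- by rewrite det_Dmat'1 // det_Dmat'0_N; ring.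
Qed.
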